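(* Let $I$ be a finite set and $T$ a tree on $I$. The map $\Pi$ sending a forest $F = T_1 \sqcup \dots \sqcup T_k$ in the interval $[\hat{0},T]$ of $\operatorname{For}(I)$ to the partition $(\mathcal{L}(T_1),\dots,\mathcal{L}(T_k))$ of $I$ is an isomorphism of posets from $([\hat{0},T],\leq)$ onto $(\operatorname{Ad}(T),\leq_r)$.
   Context: A tree on a finite set $I$ is a (non-planar) rooted binary tree whose leaves are bijectively labeled by $I$: vertices are inner vertices (valence $3$) and leaves and the root (valence $1$), edges oriented towards the root; one-leaf trees are allowed. A forest on $I$ is a set of trees whose leaf sets partition $I$. For forests $F,G$ on $I$, $F \leq G$ if there is a continuous map $F\to G$ which (D1) is increasing with respect to orientation towards the root, (D2) maps inner vertices to inner vertices injectively, (D3) is the identity of $I$ on leaves, (D4) is injective on each tree of $F$. This gives the poset $\operatorname{For}(I)$, whose minimum $\hat{0}$ is the forest without inner vertices. $\mathcal{L}(S)$ denotes the leaf set of a tree $S$. For distinct leaves $i,j$ of $T$, $v_{(i,j)}$ denotes the inner vertex of $T$ at which the paths from $i$ and from $j$ down to the root meet. For $J \subseteq I$, $\mathcal{S}(J) = \{v_{(i,j)} : i,j \in J, i \neq j\}$. A partition $(\pi_1,\dots,\pi_k)$ of $I$ is $T$-admissible if $\mathcal{S}(\pi_i)\cap\mathcal{S}(\pi_j)=\emptyset$ for all $i\neq j$; $\operatorname{Ad}(T)$ is the set of $T$-admissible partitions, ordered by refinement $\leq_r$ (each block of the smaller partition is contained in a block of the larger). *)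

From mathcomp Require Import all_boot.
Set Implicit Arguments. Unset Strict Implicit. Unset Printing Implicit Defensive.

Section Forests.
Variable I : finType.

(* A forest on I is encoded by its set of clusters: the leaf sets of the
   subtrees hanging at its leaves and inner vertices.  Leaves <-> singletons,
   inner vertices <-> clusters with >= 2 elements, trees <-> maximal clusters. *)
Definition is_forest (H : {set {set I}}) : Prop :=
  [/\ forall i : I, [set i] \in H,
      set0 \notin H,
      (forall C D, C \in H -> D \in H ->
         [\/ C \subset D, D \subset C | [disjoint C & D]]) &
      (forall C, C \in H -> 1 < #|C| ->
         exists A B, A \in H /\ B \in H /\ A \proper C /\ B \proper C /\
                        [disjoint A & B] /\ A :|: B = C /\
                        (forall D, D \in H -> D \proper C ->
                          D \subset A \/ D \subset B))].

Definition trees (H : {set {set I}}) : {set {set I}} :=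
  [set C in H | [forall D in H, (C \subset D) ==> (D == C)]].

Definition is_tree_on (T : {set {set I}}) : Prop :=
  is_forest T /\ [set: I] \in T.

Definition zero_forest : {set {set I}} := [set [set i] | i : I].

(* Vertices of the topological realization: (C, false) is the vertex (leaf or
   inner) with cluster C; (R, true) is the root of the tree with leaf set R. *)
Definition vtx := ({set I} * bool)%type.

Definition vert (H : {set {set I}}) (v : vtx) : bool :=
  if v.2 then v.1 \in trees H else v.1 \in H.

Definition inner (H : {set {set I}}) (v : vtx) : bool :=
  vert H v && ~~ v.2 && (1 < #|v.1|).

(* [below H u v]: v lies on the path from u down to the root (u <= v) *)
Definition below (H : {set {set I}}) (u v : vtx) : bool :=
  vert H u && vert H v &&
  (if u.2 then v.2 && (u.1 == v.1) else u.1 \subset v.1).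

Definition edge (H : {set {set I}}) (u v : vtx) : bool :=
  below H u v && (u != v) &&
  [forall w : vtx, (below H u w && below H w v) ==> ((w == u) || (w == v))].

Definition pathv (H : {set {set I}}) (x y : vtx) : {set vtx} :=
  [set w | below H x w && below H w y].

Definition in_tree (H : {set {set I}}) (R : {set I}) (v : vtx) : bool :=
  vert H v && below H v (R, true).

(* F <= G in For(I): existence of a continuous map F -> G with (D1)-(D4),
   encoded on the cells of the realizations: phi sends vertices to vertices
   and each edge (u,v) homeomorphically onto the monotone path from phi u
   to phi v. *)
Definition forLe (F G : {set {set I}}) : Prop :=
  is_forest F /\ is_forest G /\
  exists phi : vtx -> vtx,
  (forall v, vert F v -> vert G (phi v)) /\
      (forall u v, edge F u v -> below G (phi u) (phi v)) /\
      (forall v, inner F v -> inner G (phi v)) /\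
      (forall u v, inner F u -> inner F v -> phi u = phi v -> u = v) /\
      (forall i : I, phi ([set i], false) = ([set i], false)) /\
      (* (D4) injective on each tree of F *)
      forall R, R \in trees F ->
        [/\ (forall u v, in_tree F R u -> in_tree F R v -> phi u = phi v -> u = v),
            (forall w u v, in_tree F R w -> in_tree F R u -> edge F u v ->
               w != u -> w != v -> phi w \notin pathv G (phi u) (phi v)) &
            (forall u1 v1 u2 v2, in_tree F R u1 -> in_tree F R u2 ->
               edge F u1 v1 -> edge F u2 v2 -> (u1, v1) != (u2, v2) ->
               pathv G (phi u1) (phi v1) :&: pathv G (phi u2) (phi v2)
                 \subset phi @: ([set u1; v1] :&: [set u2; v2]))].

Definition in_interval (T F : {set {set I}}) : Prop :=
  forLe zero_forest F /\ forLe F T.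

Definition is_meet (T : {set {set I}}) (i j : I) (C : {set I}) : bool :=
  [&& C \in T, i \in C, j \in C &
      [forall D in T, ((i \in D) && (j \in D)) ==> (C \subset D)]].

Definition Sset (T : {set {set I}}) (J : {set I}) : {set {set I}} :=
  [set C | [exists i in J, exists j in J, (i != j) && is_meet T i j C]].

Definition admissible (T : {set {set I}}) (P : {set {set I}}) : Prop :=
  partition P [set: I] /\
  forall A B, A \in P -> B \in P -> A != B -> Sset T A :&: Sset T B = set0.

Definition refines (P Q : {set {set I}}) : Prop :=
  forall A, A \in P -> exists2 B, B \in Q & A \subset B.

Definition Pi (F : {set {set I}}) : {set {set I}} := trees F.

End Forests.

(* If F <= G, the structure map sends each
   cluster C of F to hull G C, the smallest cluster of G containing C: by induction
   on C, its image lies above the hulls of the two children of C, and the images of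
   the two edges below C meet only at the image of C.  Hence every cluster of F is
   hull G C :&: R for the tree R of F containing it, i.e. F = restrict G (trees F);
   and injectivity on inner vertices says that leaves i, j and k, l taken from two
   different trees of F never have the same hull in G.  Conversely, for a partition
   P whose blocks lie in trees of G and satisfy this separation, restrict G P is a
   forest with trees P, and C |-> hull G C witnesses restrict G P <= G.  For G = T,
   separation is T-admissibility, so Pi is a bijection from [0^, T] onto Ad(T) with
   inverse P |-> restrict T P; it is monotone both ways because restricting T along
   Q and then along a refinement P of Q is restricting T along P. *)

From mathcomp Require Import all_boot.
Set Implicit Arguments. Unset Strict Implicit. Unset Printing Implicit Defensive.

Section Hull.
Variable I : finType.
Implicit Types (H : {set {set I}}) (S C D : {set I}).

(* In a forest, the smallest cluster containing [S]; it is [setT] when no cluster contains [S]. *)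
Definition hull H S : {set I} := \bigcap_(D in H | S \subset D) D.

Lemma hull_min H S D : D \in H -> S \subset D -> hull H S \subset D.
Proof. by move=> DH SD; apply: (bigcap_inf D); rewrite DH SD. Qed.

Lemma sub_hull H S : S \subset hull H S.
Proof. by apply/bigcapsP => D /andP[]. Qed.

Lemma hullS H S1 S2 : S1 \subset S2 -> hull H S1 \subset hull H S2.
Proof.
by move=> S12; apply/bigcapsP => D /andP[DH S2D]; apply: hull_min (subset_trans S12 S2D).
Qed.

Lemma hull_eq H S M : M \in H -> S \subset M ->
  (forall D, D \in H -> S \subset D -> M \subset D) -> hull H S = M.
Proof.
move=> MH SM Mmin; apply/eqP; rewrite eqEsubset hull_min //=.
by apply/bigcapsP => D /andP[DH SD]; apply: Mmin.
Qed.

Lemma hull1 H i : [set i] \in H -> hull H [set i] = [set i].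
Proof. by move=> iH; apply: hull_eq. Qed.

Lemma forest_neq0 H C : is_forest H -> C \in H -> C != set0.
Proof. by case=> _ H0 _ _ CH; apply: contraNneq H0 => <-. Qed.

Lemma forest_nested H C D x : is_forest H -> C \in H -> D \in H ->
  x \in C -> x \in D -> C \subset D \/ D \subset C.
Proof.
case=> _ _ lam _ CH DH xC xD; case: (lam C D CH DH) => [||/disjointFr CD]; auto.
by rewrite (CD x xC) in xD.
Qed.

Lemma hull_mem H S D : is_forest H -> S != set0 -> D \in H -> S \subset D ->
  hull H S \in H.
Proof.
move=> Hf /set0Pn[x xS] DH SD.
pose above X := (X \in H) && (S \subset X).
have aboveD : above D by rewrite /above DH SD.
have [M /andP[MH SM] Mmin] := arg_minnP (fun X : {set I} => #|X|) aboveD.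
rewrite (hull_eq MH SM) // => E EH SE.
have xM := subsetP SM x xS; have xE := subsetP SE x xS.
case: (forest_nested Hf MH EH xM xE) => // EM.
by have /eqP <- : E == M by rewrite eqEcard EM Mmin /above ?EH.
Qed.

End Hull.

Section Children.
Variable I : finType.
Implicit Types (H : {set {set I}}) (S C D A B : {set I}).

Definition children H C A B :=
  [/\ A \in H, B \in H, A \proper C, B \proper C &
      [/\ [disjoint A & B], A :|: B = C &
          forall D, D \in H -> D \proper C -> D \subset A \/ D \subset B]].

Lemma childrenC H C A B : children H C A B -> children H C B A.
Proof.
case=> AH BH AC BC [dAB AB below_AB]; split => //.
split; rewrite 1?disjoint_sym 1?setUC // => D DH DC.
by case: (below_AB D DH DC); auto.
Qed.

Lemma children_exists H C : is_forest H -> C \in H -> 1 < #|C| ->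
  exists A B, children H C A B.
Proof.
case=> _ _ _ split_ok CH C2.
by have [A [B [? [? [? [? [? [? ?]]]]]]]] := split_ok C CH C2; exists A, B.
Qed.

Lemma children_neq H C A B : is_forest H -> children H C A B -> A != B.
Proof.
move=> Hf [AH _ _ _ [dAB _ _]]; apply: contraTneq dAB => <-.
by rewrite -setI_eq0 setIid (forest_neq0 Hf).
Qed.

Lemma hull_split H S A B : children H (hull H S) A B -> exists2 b, b \in S & b \in B.
Proof.
case=> AH _ AS _ [_ AB _].
have /subsetPn[b bS bA] : ~~ (S \subset A).
  by apply: contraL AS => /(hull_min AH) SA; rewrite properE SA andbF.
by exists b => //; move: (subsetP (sub_hull H S) b bS); rewrite -AB inE (negbTE bA).
Qed.

Lemma hull_pair H S D : is_forest H -> 1 < #|S| -> D \in H -> S \subset D ->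
  exists i j, [/\ i \in S, j \in S, i != j & hull H [set i; j] = hull H S].
Proof.
move=> Hf S2 DH SD.
have S0 : S != set0 by rewrite -card_gt0 ltnW.
have MH := hull_mem Hf S0 DH SD.
have [A [B ch]] := children_exists Hf MH (leq_trans S2 (subset_leq_card (sub_hull H S))).
have [i iS iA] := hull_split (childrenC ch); have [j jS jB] := hull_split ch.
have [_ _ _ _ [dAB _ below_AB]] := ch.
have ij : i != j by apply: contraTneq jB => <-; rewrite (disjointFr dAB iA).
exists i, j; split => //.
have ijS : [set i; j] \subset S by rewrite subUset !sub1set iS jS.
have := sub_hull H [set i; j]; rewrite subUset !sub1set => /andP[iN jN].
have ij0 : [set i; j] != set0 by apply/set0Pn; exists i; rewrite setU11.
have NH := hull_mem Hf ij0 DH (subset_trans ijS SD).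
apply/eqP; apply: contraT => neq.
have [NA|NB] : hull H [set i; j] \subset A \/ hull H [set i; j] \subset B.
  by apply: below_AB NH _; rewrite properEneq neq hullS.
- by rewrite (disjointFr dAB (subsetP NA j jN)) in jB.
- by rewrite (disjointFl dAB (subsetP NB i iN)) in iA.
Qed.

End Children.

Section Trees.
Variable I : finType.
Implicit Types (G H P : {set {set I}}) (S C D L R : {set I}).

Lemma trees_sub H : trees H \subset H.
Proof. by apply/subsetP => C; rewrite inE => /andP[]. Qed.

Lemma treesP H R :
  reflect (R \in H /\ forall D, D \in H -> R \subset D -> D = R) (R \in trees H).
Proof.
rewrite inE; apply: (iffP andP) => [[RH /forall_inP maxR]|[RH maxR]]; split => //.
  by move=> D DH RD; apply/eqP; apply: (implyP (maxR D DH)).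
by apply/forall_inP => D DH; apply/implyP => /(maxR D DH)->.
Qed.

Lemma exists_tree H C : C \in H -> exists2 R, R \in trees H & C \subset R.
Proof.
move=> CH; pose above X := (X \in H) && (C \subset X).
have aboveC : above C by rewrite /above CH subxx.
have [M /andP[MH CM] Mmax] := arg_maxnP (fun X : {set I} => #|X|) aboveC.
exists M => //; apply/treesP; split => // D DH MD.
by apply/eqP; rewrite eq_sym eqEcard MD; apply: Mmax; rewrite /above DH (subset_trans CM MD).
Qed.

Lemma tree_eq H R1 R2 x : is_forest H -> R1 \in trees H -> R2 \in trees H ->
  x \in R1 -> x \in R2 -> R1 = R2.
Proof.
move=> Hf /treesP[R1H max1] /treesP[R2H max2] x1 x2.
by case: (forest_nested Hf R1H R2H x1 x2) => [/max1|/max2] ->.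
Qed.

Lemma partition_trees H : is_forest H -> partition (trees H) [set: I].
Proof.
move=> Hf; apply/and3P; split.
- rewrite eqEsubset subsetT; apply/subsetP => i _.
  have [iH _ _ _] := Hf; have [R RT iR] := exists_tree (iH i).
  by apply/bigcupP; exists R; rewrite // (subsetP iR) ?set11.
- apply/trivIsetP => R1 R2 R1T R2T; apply: contraR => /pred0Pn[x /andP[x1 x2]].
  by rewrite (tree_eq Hf R1T R2T x1 x2).
- by apply/negP => /(subsetP (trees_sub H)) /(forest_neq0 Hf); rewrite eqxx.
Qed.

Lemma partition_eq P L1 L2 x : partition P [set: I] -> L1 \in P -> L2 \in P ->
  x \in L1 -> x \in L2 -> L1 = L2.
Proof.
move=> /partition_trivIset Pt L1P L2P x1 x2.
by rewrite -(def_pblock Pt L1P x1) (def_pblock Pt L2P x2).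
Qed.

Lemma partition_block P x : partition P [set: I] -> exists2 L, L \in P & x \in L.
Proof.
move=> Pp; have xP : x \in cover P by rewrite (cover_partition Pp) inE.
by exists (pblock P x); rewrite ?pblock_mem ?mem_pblock.
Qed.

(* It is [setT] when no tree of [G] contains [S]. *)
Definition tree_of G S : {set I} := odflt setT [pick R in trees G | S \subset R].

Lemma tree_ofP G S D : D \in G -> S \subset D ->
  tree_of G S \in trees G /\ S \subset tree_of G S.
Proof.
rewrite /tree_of => DG SD; case: pickP => [R /andP[] //|none].
have [R RT DR] := exists_tree DG.
by have := none R; rewrite RT (subset_trans SD DR).
Qed.

End Trees.

Section Restrict.
Variable I : finType.
Implicit Types (G P : {set {set I}}) (S X D L : {set I}).

Definition restrict G P : {set {set I}} := [set D :&: L | D in G, L in P] :\ set0.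

Lemma restrictP G P X : reflect
  (exists D L, [/\ D \in G, L \in P, X = D :&: L & X != set0]) (X \in restrict G P).
Proof.
apply: (iffP setD1P) => [[X0 /imset2P[D L DG LP eX]]|[D [L [DG LP eX X0]]]].
  by exists D, L.
by split; rewrite // eX; apply: imset2_f.
Qed.

Lemma mem_restrict G P D L : D \in G -> L \in P -> D :&: L != set0 ->
  D :&: L \in restrict G P.
Proof. by move=> DG LP DL0; apply/restrictP; exists D, L. Qed.

Variables (G P : {set {set I}}).
Hypotheses (Gf : is_forest G) (Pp : partition P [set: I]) (PG : refines P (trees G)).
Let F := restrict G P.

Lemma restrict_block X : X \in F -> exists2 L, L \in P & X \subset L.
Proof. by case/restrictP => D [L [_ LP -> _]]; exists L => //; apply: subsetIr. Qed.

Lemma restrict_sub_block X L x : X \in F -> L \in P -> x \in X -> x \in L -> X \subset L.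
Proof.
move=> XF LP xX xL; have [L' L'P XL'] := restrict_block XF.
by rewrite (partition_eq Pp LP L'P xL (subsetP XL' x xX)).
Qed.

Lemma restrict_hull_mem X : X \in F -> hull G X \in G.
Proof.
case/restrictP => D [L [DG _ eX X0]].
by apply: hull_mem Gf X0 DG _; rewrite eX subsetIl.
Qed.

Lemma restrict_blockE X L : X \in F -> L \in P -> X \subset L -> X = hull G X :&: L.
Proof.
move=> XF LP XL; case/restrictP: (XF) => D [L' [DG L'P eX /set0Pn[x xX]]].
have xL' : x \in L' by move: xX; rewrite eX => /setIP[].
have eL := partition_eq Pp L'P LP xL' (subsetP XL x xX); subst L'.
apply/eqP; rewrite eqEsubset subsetI sub_hull XL /=.
by rewrite {2}eX setSI // hull_min // eX subsetIl.
Qed.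

Lemma restrict_hull_subE X1 X2 L : X1 \in F -> X2 \in F -> L \in P ->
  X1 \subset L -> X2 \subset L -> (hull G X1 \subset hull G X2) = (X1 \subset X2).
Proof.
move=> X1F X2F LP X1L X2L; apply/idP/idP => [sub|/(hullS G)//].
by rewrite (restrict_blockE X1F LP X1L) (restrict_blockE X2F LP X2L) setSI.
Qed.

Lemma restrict_nested X1 X2 : X1 \in F -> X2 \in F ->
  [\/ X1 \subset X2, X2 \subset X1 | [disjoint X1 & X2]].
Proof.
move=> /restrictP[D1 [L1 [D1G L1P -> _]]] /restrictP[D2 [L2 [D2G L2P -> _]]].
have [<-|neL] := eqVneq L1 L2.
  have [_ _ lam _] := Gf.
  case: (lam D1 D2 D1G D2G) => [D12|D21|dD]; [constructor 1|constructor 2|constructor 3].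
  - exact: setSI.
  - exact: setSI.
  - exact: disjointWl (subsetIl _ _) (disjointWr (subsetIl _ _) dD).
constructor 3; apply: disjointWl (subsetIr _ _) (disjointWr (subsetIr _ _) _).
exact: trivIsetP (partition_trivIset Pp) L1 L2 L1P L2P neL.
Qed.

Lemma restrict_children X : X \in F -> 1 < #|X| -> exists A B, children F X A B.
Proof.
move=> XF X2; have [L LP XL] := restrict_block XF.
have eX := restrict_blockE XF LP XL; have MG := restrict_hull_mem XF.
have [A [B ch]] := children_exists Gf MG (leq_trans X2 (subset_leq_card (sub_hull G X))).
have [a aX aA] := hull_split (childrenC ch); have [b bX bB] := hull_split ch.
have [AG BG _ _ [dAB AB below_AB]] := ch.
have aL := subsetP XL a aX; have bL := subsetP XL b bX.
have XAB : X = (A :&: L) :|: (B :&: L) by rewrite -setIUl AB.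
have notA : b \notin A :&: L by rewrite inE (disjointFl dAB bB).
have notB : a \notin B :&: L by rewrite inE (disjointFr dAB aA).
exists (A :&: L), (B :&: L); split.
- by apply: mem_restrict => //; apply/set0Pn; exists a; rewrite inE aA.
- by apply: mem_restrict => //; apply/set0Pn; exists b; rewrite inE bB.
- by apply/properP; split; [rewrite XAB subsetUl | exists b].
- by apply/properP; split; [rewrite XAB subsetUr | exists a].
split; [exact: disjointWl (subsetIl _ _) (disjointWr (subsetIl _ _) dAB)|by rewrite -XAB|].
move=> E EF EX; have EL := subset_trans (proper_sub EX) XL.
have hEX : hull G E \subset hull G X := hullS G (proper_sub EX).
have eE := restrict_blockE EF LP EL.
have [ehEX|nehEX] := eqVneq (hull G E) (hull G X).
  by rewrite eE ehEX -eX properxx in EX.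
have [EA|EB] : hull G E \subset A \/ hull G E \subset B.
  by apply: below_AB (restrict_hull_mem EF) _; rewrite properEneq nehEX hEX.
- by left; rewrite eE setSI.
- by right; rewrite eE setSI.
Qed.

Lemma restrict_forest : is_forest F.
Proof.
split.
- move=> i; have [L LP iL] := partition_block i Pp.
  have [iG _ _ _] := Gf.
  rewrite -(setIidPl (_ : [set i] \subset L)) ?sub1set //.
  by apply: mem_restrict => //; apply/set0Pn; exists i; rewrite inE set11 iL.
- by rewrite !inE eqxx.
- exact: restrict_nested.
move=> X XF X2; have [A [B [AF BF AX BX [dAB AB below_AB]]]] := restrict_children XF X2.
by exists A, B.
Qed.

Lemma block_cluster L : L \in P -> exists2 D, D \in G & L \subset D.
Proof.
by case/PG => R RT LR; exists R; rewrite ?(subsetP (trees_sub G)).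
Qed.

Lemma mem_restrict_block L : L \in P -> L \in F.
Proof.
move=> LP; have [D DG LD] := block_cluster LP.
rewrite -(setIidPr LD) mem_restrict ?(setIidPr LD) //.
exact: partition_neq0 Pp LP.
Qed.

Lemma trees_restrict : trees F = P.
Proof.
have PF := mem_restrict_block.
apply/setP => R; apply/idP/idP => [/treesP[RF maxR]|RP].
  by have [L LP RL] := restrict_block RF; rewrite -(maxR L (PF L LP) RL).
apply/treesP; split; first exact: PF.
have /set0Pn[x xR] := partition_neq0 Pp RP.
move=> D DF RD; apply/eqP; rewrite eqEsubset RD andbT.
exact: restrict_sub_block DF RP (subsetP RD x xR) xR.
Qed.

Lemma hull_restrict S L : S != set0 -> L \in P -> S \subset L ->
  hull F S = hull G S :&: L.
Proof.
move=> S0 LP SL; have [D DG LD] := block_cluster LP.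
have /set0Pn[x xS] := S0; have xL := subsetP SL x xS.
apply: hull_eq.
- apply: mem_restrict => //; first exact: hull_mem Gf S0 DG (subset_trans SL LD).
  by apply/set0Pn; exists x; rewrite inE (subsetP (sub_hull G S)) ?xL.
- by rewrite subsetI sub_hull SL.
move=> X XF SX; have XL := restrict_sub_block XF LP (subsetP SX x xS) xL.
by rewrite (restrict_blockE XF LP XL) setSI ?hullS.
Qed.

End Restrict.

Section Realization.
Variable I : finType.
Implicit Types (H : {set {set I}}) (C D R W A B : {set I}) (u v : vtx I).

Lemma below_cc H C D : below H (C, false) (D, false) = [&& C \in H, D \in H & C \subset D].
Proof. by rewrite /below /vert /= andbA. Qed.

Lemma below_cr H C R :
  below H (C, false) (R, true) = [&& C \in H, R \in trees H & C \subset R].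
Proof. by rewrite /below /vert /= andbA. Qed.

Lemma below_root H R v : below H (R, true) v -> v = (R, true).
Proof. by case: v => V [] /andP[_] //= /eqP->. Qed.

Lemma below_cluster H u D : below H u (D, false) -> u.2 = false.
Proof. by case: u => U [] //; rewrite /below /= andbF. Qed.

Lemma below_refl H v : vert H v -> below H v v.
Proof. by case: v => V [] vV; rewrite /below vV ?eqxx ?subxx. Qed.

Lemma edge_below H u v : edge H u v -> below H u v.
Proof. by case/andP => /andP[]. Qed.

Lemma edge_cc H C D : edge H (C, false) (D, false) ->
  [/\ C \in H, D \in H, C \subset D, C != D &
      forall W, W \in H -> C \subset W -> W \subset D -> W = C \/ W = D].
Proof.
case/andP => /andP[]; rewrite below_cc => /and3P[CH DH CD] neCD /forallP between.
split => //; first by apply: contra neCD => /eqP->.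
move=> W WH CW WD; have := between (W, false); rewrite !below_cc CH DH WH CW WD.
by rewrite !xpair_eqE !andbT => /orP[]/eqP->; auto.
Qed.

Lemma edge_cr H C R : edge H (C, false) (R, true) -> C = R /\ R \in trees H.
Proof.
case/andP => /andP[]; rewrite below_cr => /and3P[CH RT CR] _ /forallP between.
have RH := subsetP (trees_sub H) R RT.
have := between (R, false); rewrite below_cc below_cr CH RH RT CR subxx /=.
by rewrite !xpair_eqE andbT andbF orbF => /eqP.
Qed.

Lemma edge_from_root H R v : ~ edge H (R, true) v.
Proof. by case/andP => /andP[/below_root->]; rewrite eqxx. Qed.

Lemma edge_children H C A B : is_forest H -> C \in H -> children H C A B ->
  edge H (A, false) (C, false).
Proof.
move=> Hf CH [AH _ AC _ [dAB _ below_AB]].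
rewrite /edge below_cc AH CH (proper_sub AC) xpair_eqE eqxx !andbT (proper_neq AC) /=.
apply/forallP => -[W b]; apply/implyP => /andP[AW WC].
have /= b0 := below_cluster WC; subst b.
move: AW WC; rewrite !below_cc => /and3P[_ WH AW] /and3P[_ _ WC].
rewrite !xpair_eqE !andbT; have [->|neWC] := eqVneq W C; first by rewrite orbT.
have [WA|WB] : W \subset A \/ W \subset B by apply: below_AB; rewrite ?properEneq ?neWC.
  by rewrite eqEsubset WA AW.
have /set0Pn[x xA] := forest_neq0 Hf AH.
by have := subsetP WB x (subsetP AW x xA); rewrite (disjointFr dAB xA).
Qed.

Lemma in_tree_cluster H R C : C \in H -> R \in trees H -> C \subset R -> in_tree H R (C, false).
Proof. by move=> CH RT CR; rewrite /in_tree /vert /= CH below_cr CH RT CR. Qed.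

Lemma in_treeP H R u : in_tree H R u ->
  (exists2 C, u = (C, false) & [/\ C \in H & C \subset R]) \/ u = (R, true).
Proof.
case: u => C [] /andP[_ CR]; first by right; rewrite (below_root CR).
by left; exists C; move: CR; rewrite // below_cr => /and3P[].
Qed.

Lemma edge_in_tree H R u v : is_forest H -> R \in trees H -> in_tree H R u -> edge H u v ->
  u = (R, false) /\ v = (R, true) \/
  exists C D, [/\ u = (C, false), v = (D, false), D \subset R & edge H (C, false) (D, false)].
Proof.
move=> Hf RT /in_treeP[[C -> [CH CR]] | ->] uv; last by case: (edge_from_root uv).
have /set0Pn[x xC] := forest_neq0 Hf CH.
case: v uv => D [] uv.
  have [<- DT] := edge_cr uv.
  by left; rewrite (tree_eq Hf RT DT (subsetP CR x xC) xC).
right; exists C, D; split => //; have [_ DH CD _ _] := edge_cc uv.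
have /treesP[RH maxR] := RT.
by case: (forest_nested Hf DH RH (subsetP CD x xC) (subsetP CR x xC)) => // /maxR ->.
Qed.

Lemma edge_parent_eq H C D1 D2 : is_forest H ->
  edge H (C, false) (D1, false) -> edge H (C, false) (D2, false) -> D1 = D2.
Proof.
move=> Hf /edge_cc[CH D1H CD1 neCD1 between1] /edge_cc[_ D2H CD2 neCD2 between2].
have /set0Pn[x xC] := forest_neq0 Hf CH.
case: (forest_nested Hf D1H D2H (subsetP CD1 x xC) (subsetP CD2 x xC)) => [D12|D21].
  by case: (between2 D1 D1H CD1 D12) => // eD1; rewrite eD1 eqxx in neCD1.
by case: (between1 D2 D2H CD2 D21) => // eD2; rewrite eD2 eqxx in neCD2.
Qed.

Lemma pathv_cc H C D x : x \in pathv H (C, false) (D, false) ->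
  exists2 X, x = (X, false) & [/\ X \in H, C \subset X & X \subset D].
Proof.
rewrite inE; case: x => X b /andP[CX XD]; have /= b0 := below_cluster XD; subst b.
by exists X => //; move: CX XD; rewrite !below_cc => /and3P[_ -> ->] /and3P[_ _ ->].
Qed.

End Realization.

(* T-admissibility, with the meet v_(i,j) of T read as [hull T [set i; j]]. *)
Definition separated (I : finType) (G P : {set {set I}}) :=
  forall L1 L2 i j k l, L1 \in P -> L2 \in P -> L1 != L2 ->
    i \in L1 -> j \in L1 -> k \in L2 -> l \in L2 -> i != j -> k != l ->
    hull G [set i; j] != hull G [set k; l].

Section Morphism.
Variables (I : finType) (F G : {set {set I}}) (phi : vtx I -> vtx I).
Implicit Types (S C D A B R : {set I}).
(* The clauses of [forLe F G] for the map [phi]. *)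
Hypotheses (Ff : is_forest F) (Gf : is_forest G)
  (phi_vert : forall v, vert F v -> vert G (phi v))
  (phi_mono : forall u v, edge F u v -> below G (phi u) (phi v))
  (phi_inner : forall v, inner F v -> inner G (phi v))
  (phi_inner_inj : forall u v, inner F u -> inner F v -> phi u = phi v -> u = v)
  (phi_leaf : forall i : I, phi ([set i], false) = ([set i], false))
  (phi_tree_inj : forall R, R \in trees F ->
     forall u v, in_tree F R u -> in_tree F R v -> phi u = phi v -> u = v)
  (phi_edges_meet : forall R, R \in trees F ->
     forall u1 v1 u2 v2, in_tree F R u1 -> in_tree F R u2 ->
       edge F u1 v1 -> edge F u2 v2 -> (u1, v1) != (u2, v2) ->
       pathv G (phi u1) (phi v1) :&: pathv G (phi u2) (phi v2)
         \subset phi @: ([set u1; v1] :&: [set u2; v2])).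

Lemma morph_edges_meet C A B : C \in F -> children F C A B ->
  pathv G (phi (A, false)) (phi (C, false)) :&: pathv G (phi (B, false)) (phi (C, false))
    \subset [set phi (C, false)].
Proof.
move=> CF ch; have [AF BF AC BC _] := ch.
have [R RT CR] := exists_tree CF.
have inA := in_tree_cluster AF RT (subset_trans (proper_sub AC) CR).
have inB := in_tree_cluster BF RT (subset_trans (proper_sub BC) CR).
have neAB : (A, false) != (B, false) by rewrite xpair_eqE eqxx andbT (children_neq Ff ch).
apply: subset_trans (phi_edges_meet RT inA inB (edge_children Ff CF ch)
  (edge_children Ff CF (childrenC ch)) _) _; first by rewrite xpair_eqE negb_and neAB.
apply/subsetP => x /imsetP[w]; rewrite !inE => /andP[wAC wBC] ->.
by case/orP: wAC wBC => /eqP-> //; rewrite (negbTE neAB) => /eqP->.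
Qed.

Lemma morph_cluster C : C \in F -> phi (C, false) = (hull G C, false).
Proof.
have [n] := ubnP #|C|; elim: n C => // n IHn C leCn CF.
have [C1|C2] := leqP #|C| 1.
  have /cards1P[i ->] : #|C| == 1 by rewrite eqn_leq C1 card_gt0 (forest_neq0 Ff CF).
  by rewrite phi_leaf hull1 //; case: Gf.
have [A [B ch]] := children_exists Ff CF C2; have [AF BF AC BC [_ AB _]] := ch.
have phiA : phi (A, false) = (hull G A, false).
  by apply: IHn AF; apply: leq_trans (proper_card _) leCn.
have phiB : phi (B, false) = (hull G B, false).
  by apply: IHn BF; apply: leq_trans (proper_card _) leCn.
have: inner G (phi (C, false)) by apply: phi_inner; rewrite /inner /vert /= CF C2.
case ephiC: (phi (C, false)) => [D []]; first by rewrite /inner andbF.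
rewrite /inner /vert /= => /andP[/andP[DG _] _].
have := phi_mono (edge_children Ff CF ch); rewrite phiA ephiC below_cc => /and3P[AG _ AD].
have := phi_mono (edge_children Ff CF (childrenC ch)); rewrite phiB ephiC below_cc.
case/and3P => BG _ BD.
have CD : C \subset D.
  by rewrite -AB subUset (subset_trans (sub_hull G A) AD) (subset_trans (sub_hull G B) BD).
have CG := hull_mem Gf (forest_neq0 Ff CF) DG CD.
(* [(hull G C, false)] lies on the images of both edges below [C], which meet only at [phi C]. *)
have := subsetP (morph_edges_meet CF ch) (hull G C, false).
rewrite phiA phiB ephiC !inE !below_cc AG BG CG DG (hull_min DG CD).
by rewrite !hullS ?proper_sub // => /(_ isT) /eqP.
Qed.

Lemma morph_hull_mem C : C \in F -> hull G C \in G.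
Proof. by move=> CF; have := @phi_vert (C, false) CF; rewrite morph_cluster. Qed.

Lemma morph_children_disjoint C A B : C \in F -> children F C A B ->
  [disjoint hull G A & hull G B].
Proof.
have nested_sub X Y : C \in F -> children F C X Y -> ~~ (hull G X \subset hull G Y).
  move=> CF ch; have [XF YF XC YC _] := ch; apply/negP => XY.
  have [R RT CR] := exists_tree CF.
  have inY := in_tree_cluster YF RT (subset_trans (proper_sub YC) CR).
  have inC := in_tree_cluster CF RT CR.
  have := subsetP (morph_edges_meet CF ch) (hull G Y, false).
  rewrite !morph_cluster // !inE !below_cc !morph_hull_mem // XY subxx.
  rewrite !hullS ?proper_sub // => /(_ isT) /eqP eYC.
  have [eYC'] : (Y, false) = (C, false).
    by apply: (phi_tree_inj RT inY inC); rewrite !morph_cluster // eYC.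
  by rewrite eYC' properxx in YC.
move=> CF ch; have [AF BF _ _ _] := ch.
apply/pred0P => x /=; apply/negbTE/negP => /andP[xA xB].
case: (forest_nested Gf (morph_hull_mem AF) (morph_hull_mem BF) xA xB) => sub.
  by move: (nested_sub A B CF ch); rewrite sub.
by move: (nested_sub B A CF (childrenC ch)); rewrite sub.
Qed.

Lemma morph_clusterE C R : C \in F -> R \in trees F -> C \subset R -> C = hull G C :&: R.
Proof.
move=> CF RT CR; apply/eqP; rewrite eqEsubset subsetI sub_hull CR /=.
apply/subsetP => i /setIP[iC' iR]; apply: contraT => iC.
(* Above [C] there is a cluster [K] of [F] containing [i] whose children would have
   intersecting hulls in [G]. *)
have RF := subsetP (trees_sub F) R RT.
have CiR : C :|: [set i] \subset R by rewrite subUset CR sub1set iR.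
have Ci0 : C :|: [set i] != set0 by apply/set0Pn; exists i; rewrite !inE eqxx orbT.
have KF := hull_mem Ff Ci0 RF CiR; set K := hull F _ in KF.
have CK : C \subset K by apply: subset_trans (sub_hull F _); apply: subsetUl.
have iK : i \in K by apply: (subsetP (sub_hull F _)); rewrite !inE eqxx orbT.
have pCK : C \proper K by apply/properP; split; last by exists i.
have K2 : 1 < #|K| by apply: leq_ltn_trans (proper_card pCK); rewrite card_gt0 (forest_neq0 Ff CF).
have [A0 [B0 ch0]] := children_exists Ff KF K2.
have [A [B [ch CA]]] : exists A B, children F K A B /\ C \subset A.
  have [_ _ _ _ [_ _ below_AB]] := ch0.
  by case: (below_AB C CF pCK) => ?; [exists A0, B0 | exists B0, A0; split; first exact: childrenC].
have [AF BF AK _ [_ AB _]] := ch.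
have iA : i \notin A.
  apply: contraL AK => iA; rewrite properE negb_and negbK orbC hull_min //.
  by rewrite subUset CA sub1set.
have iB : i \in B by move: iK; rewrite -AB inE (negbTE iA).
have := morph_children_disjoint KF ch => /disjointFr/(_ (subsetP (hullS G CA) i iC')).
by rewrite (subsetP (sub_hull G B) i iB).
Qed.

Lemma morph_children_hull_sub K X Y D x y : K \in F -> children F K X Y -> D \in G ->
  x \in D -> x \in X -> y \in D -> y \in Y -> hull G X \subset D.
Proof.
move=> KF ch DG xD xX yD yY; have [XF YF _ _ _] := ch.
have xX' := subsetP (sub_hull G X) x xX.
case: (forest_nested Gf DG (morph_hull_mem XF) xD xX') => // DX.
have := morph_children_disjoint KF ch => /disjointFr/(_ (subsetP DX y yD)).
by rewrite (subsetP (sub_hull G Y) y yY).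
Qed.

Lemma morph_restrict_mem D R : D \in G -> R \in trees F -> D :&: R != set0 ->
  D :&: R \in F.
Proof.
move=> DG RT S0; have RF := subsetP (trees_sub F) R RT; set S := D :&: R in S0 *.
have KF := hull_mem Ff S0 RF (subsetIr D R); set K := hull F S in KF.
have [<- //|neKS] := eqVneq K S.
have pSK : S \proper K by rewrite properEneq eq_sym neKS sub_hull.
have K2 : 1 < #|K| by apply: leq_ltn_trans (proper_card pSK); rewrite card_gt0.
have [A [B ch]] := children_exists Ff KF K2; have [_ _ _ _ [_ AB _]] := ch.
have [a aS aA] := hull_split (childrenC ch); have [b bS bB] := hull_split ch.
have [aD _] := setIP aS; have [bD _] := setIP bS.
have AD := morph_children_hull_sub KF ch DG aD aA bD bB.
have BD := morph_children_hull_sub KF (childrenC ch) DG bD bB aD aA.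
have KD : K \subset D.
  by rewrite -AB subUset (subset_trans (sub_hull G A) AD) (subset_trans (sub_hull G B) BD).
have KS : K \subset S by rewrite subsetI KD hull_min ?subsetIr.
by rewrite properE KS andbF in pSK.
Qed.

Lemma morph_hull_hull S L : S != set0 -> L \in trees F -> S \subset L ->
  hull G (hull F S) = hull G S.
Proof.
move=> S0 LT SL; have LF := subsetP (trees_sub F) L LT.
have KF := hull_mem Ff S0 LF SL.
have SG := hull_mem Gf S0 (morph_hull_mem KF) (subset_trans (sub_hull F S) (sub_hull G _)).
apply/eqP; rewrite eqEsubset (hullS G (sub_hull F S)) andbT hull_min //.
have /set0Pn[x xS] := S0.
have SLF : hull G S :&: L \in F.
  apply: morph_restrict_mem => //; apply/set0Pn; exists x.
  by rewrite inE (subsetP (sub_hull G S)) ?(subsetP SL).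
by apply: subset_trans (subsetIl _ L); apply: hull_min SLF _; rewrite subsetI sub_hull.
Qed.

Lemma morph_restrict : F = restrict G (trees F).
Proof.
apply/setP => X; apply/idP/idP => [XF|/restrictP[D [R [DG RT -> DR0]]]].
  have [R RT XR] := exists_tree XF.
  rewrite (morph_clusterE XF RT XR) mem_restrict ?morph_hull_mem //.
  by rewrite -(morph_clusterE XF RT XR) (forest_neq0 Ff XF).
exact: morph_restrict_mem.
Qed.

Lemma morph_separated : separated G (trees F).
Proof.
have pair_hull L i j : L \in trees F -> i \in L -> j \in L -> i != j ->
    [/\ inner F (hull F [set i; j], false), hull F [set i; j] \subset L &
        phi (hull F [set i; j], false) = (hull G [set i; j], false)].
  move=> LT iL jL ij; have LF := subsetP (trees_sub F) L LT.
  have ijL : [set i; j] \subset L by rewrite subUset !sub1set iL jL.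
  have ij0 : [set i; j] != set0 by apply/set0Pn; exists i; rewrite setU11.
  have KF := hull_mem Ff ij0 LF ijL.
  split; last by rewrite morph_cluster // (morph_hull_hull ij0 LT ijL).
    rewrite /inner /vert /= KF /= (leq_trans _ (subset_leq_card (sub_hull F _))) //.
    by rewrite cards2 ij.
  exact: hull_min LF ijL.
move=> L1 L2 i j k l L1T L2T neL iL1 jL1 kL2 lL2 ij kl; apply/eqP => e.
have [in1 sub1 phi1] := pair_hull L1 i j L1T iL1 jL1 ij.
have [in2 sub2 phi2] := pair_hull L2 k l L2T kL2 lL2 kl.
have [e12] : (hull F [set i; j], false) = (hull F [set k; l], false).
  by apply: (phi_inner_inj in1 in2); rewrite phi1 phi2 e.
have iL2 : i \in L2 by rewrite (subsetP sub2) // -e12 (subsetP (sub_hull F _)) ?setU11.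
by rewrite (tree_eq Ff L1T L2T iL1 iL2) eqxx in neL.
Qed.

Lemma morph_refines : refines (trees F) (trees G).
Proof.
move=> R RT; have [R' R'T sub] := exists_tree (morph_hull_mem (subsetP (trees_sub F) R RT)).
by exists R' => //; apply: subset_trans (sub_hull G R) sub.
Qed.

End Morphism.

Lemma forLe_restrict (I : finType) (F G : {set {set I}}) : forLe F G ->
  [/\ F = restrict G (trees F), separated G (trees F) & refines (trees F) (trees G)].
Proof.
case=> Ff [Gf [phi [vert_phi [mono_phi [inner_phi [inj_phi [leaf_phi D4_phi]]]]]]].
have tree_inj R : R \in trees F -> _ := fun RT => let: And3 h _ _ := D4_phi R RT in h.
have edges_meet R : R \in trees F -> _ := fun RT => let: And3 _ _ h := D4_phi R RT in h.
by split; [apply: morph_restrict | apply: morph_separated | apply: morph_refines]; eassumption.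
Qed.

Definition hull_map (I : finType) (G : {set {set I}}) (v : vtx I) : vtx I :=
  if v.2 then (tree_of G v.1, true) else (hull G v.1, false).

Section HullMap.
Variables (I : finType) (G P : {set {set I}}).
Implicit Types (C D R W X : {set I}) (u v w : vtx I).
Hypotheses (Gf : is_forest G) (Pp : partition P [set: I]) (PG : refines P (trees G))
  (Psep : separated G P).
Let F := restrict G P.
Let phi := hull_map G.
Let Ff : is_forest F := restrict_forest Gf Pp.
Let FP : trees F = P := trees_restrict Pp PG.

Lemma hull_map_vert v : vert F v -> vert G (phi v).
Proof.
case: v => C [] /=; rewrite /vert /=; last exact: restrict_hull_mem.
by rewrite FP => /PG[R RT CR]; have [] := tree_ofP (subsetP (trees_sub G) R RT) CR.
Qed.

Lemma hull_map_mono u v : below F u v -> below G (phi u) (phi v).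
Proof.
case: u v => C [] [D []] uv.
- by rewrite (below_root uv) below_refl // hull_map_vert //; case/andP: uv => /andP[].
- by have := below_cluster uv.
- move: uv; rewrite !below_cr FP => /and3P[CF /PG[R RT DR] CD].
  have [DT DD] := tree_ofP (subsetP (trees_sub G) R RT) DR.
  rewrite (restrict_hull_mem Gf CF) DT hull_min ?(subset_trans CD) //.
  exact: subsetP (trees_sub G) _ DT.
- move: uv; rewrite !below_cc => /and3P[CF DF CD].
  by rewrite (restrict_hull_mem Gf CF) (restrict_hull_mem Gf DF) hullS.
Qed.

Lemma hull_map_inner v : inner F v -> inner G (phi v).
Proof.
case: v => C []; rewrite /inner /vert /= ?andbF // !andbT => /andP[CF C2].
by rewrite (restrict_hull_mem Gf CF) /= (leq_trans C2) ?subset_leq_card ?sub_hull.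
Qed.

Lemma hull_map_inner_inj u v : inner F u -> inner F v -> phi u = phi v -> u = v.
Proof.
case: u v => C1 [] [C2 []]; rewrite /inner /vert /= ?andbF // !andbT.
move=> /andP[C1F C12] /andP[C2F C22] [e].
have [L1 L1P C1L] := restrict_block C1F; have [L2 L2P C2L] := restrict_block C2F.
have [eL|neL] := eqVneq L1 L2.
  subst L2; rewrite (restrict_blockE Pp C1F L1P C1L) (restrict_blockE Pp C2F L1P C2L).
  by rewrite e.
have [D1 D1G C1D] := block_cluster PG L1P; have [D2 D2G C2D] := block_cluster PG L2P.
have [i [j [iC jC ij ei]]] := hull_pair Gf C12 D1G (subset_trans C1L C1D).
have [k [l [kC lC kl ek]]] := hull_pair Gf C22 D2G (subset_trans C2L C2D).
have := Psep L1P L2P neL (subsetP C1L i iC) (subsetP C1L j jC)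
  (subsetP C2L k kC) (subsetP C2L l lC) ij kl.
by rewrite ei ek e eqxx.
Qed.

Lemma hull_map_leaf i : phi ([set i], false) = ([set i], false).
Proof. by rewrite /phi /hull_map /= hull1 //; case: Gf. Qed.

Lemma hull_map_tree_inj R u v : R \in P -> in_tree F R u -> in_tree F R v -> phi u = phi v -> u = v.
Proof.
move=> RP /in_treeP[[C1 -> [C1F C1R]]|->] /in_treeP[[C2 -> [C2F C2R]]|->] //= [e].
by rewrite (restrict_blockE Pp C1F RP C1R) (restrict_blockE Pp C2F RP C2R) e.
Qed.

Lemma hull_map_avoid R w u v : R \in P -> in_tree F R w -> in_tree F R u -> edge F u v ->
  w != u -> w != v -> phi w \notin pathv G (phi u) (phi v).
Proof.
move=> RP wt ut uv nwu nwv; have RT : R \in trees F by rewrite FP.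
have RF := mem_restrict_block Pp PG RP.
case: (in_treeP wt) nwu nwv => [[W -> [WF WR]] | ->] nwu nwv; last first.
  case: (edge_in_tree Ff RT ut uv) => [[_ ev] | [C [D [_ -> _ _]]]].
    by rewrite ev eqxx in nwv.
  by apply/negP; rewrite inE => /andP[_ /below_cluster].
case: (edge_in_tree Ff RT ut uv) => [[eu ev] | [C [D [eu ev DR CD]]]]; subst u v.
  rewrite inE /= below_cc; apply/negP => /andP[/and3P[_ _ RW] _].
  rewrite (restrict_hull_subE Pp RF WF RP (subxx R) WR) in RW.
  by rewrite xpair_eqE eqxx andbT eqEsubset WR RW in nwu.
have [CF DF CsD _ between] := edge_cc CD; have CR := subset_trans CsD DR.
apply/negP => /pathv_cc[_ [<-] [_ CW WD]].
rewrite (restrict_hull_subE Pp CF WF RP CR WR) in CW.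
rewrite (restrict_hull_subE Pp WF DF RP WR DR) in WD.
by case: (between W WF CW WD) => eW; rewrite eW eqxx in nwu nwv.
Qed.

Lemma hull_map_root_edge_meet R C D x : R \in P -> edge F (C, false) (D, false) -> D \subset R ->
  x \in pathv G (phi (C, false)) (phi (D, false)) ->
  x \in pathv G (phi (R, false)) (phi (R, true)) -> D = R /\ x = phi (R, false).
Proof.
move=> RP CD DR /pathv_cc[X -> [_ CX XD]]; rewrite inE /= below_cc => /andP[/and3P[_ _ RX] _].
have [_ DF _ _ _] := edge_cc CD; have RF := mem_restrict_block Pp PG RP.
have RD : hull G R \subset hull G D := subset_trans RX XD.
rewrite (restrict_hull_subE Pp RF DF RP (subxx R) DR) in RD.
have eDR : D = R by apply/eqP; rewrite eqEsubset DR RD.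
by split => //; congr (_, _); apply/eqP; rewrite eqEsubset RX -eDR XD.
Qed.

Lemma hull_map_cluster_edges_meet R C1 D1 C2 D2 x : R \in P ->
  edge F (C1, false) (D1, false) -> edge F (C2, false) (D2, false) ->
  D1 \subset R -> D2 \subset R -> ((C1, false), (D1, false)) != ((C2, false), (D2, false)) ->
  x \in pathv G (phi (C1, false)) (phi (D1, false)) ->
  x \in pathv G (phi (C2, false)) (phi (D2, false)) ->
  x \in phi @: ([set (C1, false); (D1, false)] :&: [set (C2, false); (D2, false)]).
Proof.
move=> RP e1 e2 D1R D2R ne /pathv_cc[X -> [XG C1X XD1]] /pathv_cc[_ [<-] [_ C2X XD2]].
have [C1F D1F C1D1 _ between1] := edge_cc e1; have [C2F D2F C2D2 _ between2] := edge_cc e2.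
have C1R := subset_trans C1D1 D1R; have C2R := subset_trans C2D2 D2R.
(* [X :&: R] is a cluster of [F] on both edges, hence one of their common endpoints. *)
have YF : X :&: R \in F.
  have /set0Pn[y yC1] := forest_neq0 Ff C1F.
  apply: mem_restrict XG RP _; apply/set0Pn; exists y.
  by rewrite inE (subsetP C1R) ?(subsetP C1X) ?(subsetP (sub_hull G C1)).
have CY C : C \in F -> C \subset R -> hull G C \subset X -> C \subset X :&: R.
  by move=> CF CR CX; rewrite subsetI CR (subset_trans (sub_hull G C)).
have YD D : D \in F -> D \subset R -> X \subset hull G D -> X :&: R \subset D.
  by move=> DF DR XD; rewrite (subset_trans (setSI R XD)) // -(restrict_blockE Pp DF RP DR).
have top D : D \in F -> X \subset hull G D -> D = X :&: R -> (X, false) = phi (D, false).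
  by move=> DF XD eD; congr (_, _); apply/eqP; rewrite eqEsubset XD hull_min // eD subsetIl.
have [eY1|eY1] := between1 _ YF (CY _ C1F C1R C1X) (YD _ D1F D1R XD1);
have [eY2|eY2] := between2 _ YF (CY _ C2F C2R C2X) (YD _ D2F D2R XD2).
- have eC : C2 = C1 by rewrite -eY1 -eY2.
  by move: e2 ne; rewrite eC => /(edge_parent_eq Ff e1)->; rewrite eqxx.
- apply/imsetP; exists (D2, false); last exact: top.
  by rewrite !inE -eY1 -eY2 !eqxx !orbT.
- apply/imsetP; exists (D1, false); last exact: top.
  by rewrite !inE -eY1 -eY2 !eqxx !orbT.
apply/imsetP; exists (D1, false); last exact: top.
by rewrite !inE -eY1 -eY2 !eqxx !orbT.
Qed.

Lemma hull_map_edges_meet R u1 v1 u2 v2 : R \in P -> in_tree F R u1 -> in_tree F R u2 ->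
  edge F u1 v1 -> edge F u2 v2 -> (u1, v1) != (u2, v2) ->
  pathv G (phi u1) (phi v1) :&: pathv G (phi u2) (phi v2)
    \subset phi @: ([set u1; v1] :&: [set u2; v2]).
Proof.
move=> RP u1t u2t e1 e2 ne; have RT : R \in trees F by rewrite FP.
apply/subsetP => x /setIP[x1 x2].
have root_meet C D : edge F (C, false) (D, false) -> D \subset R ->
    x \in pathv G (phi (C, false)) (phi (D, false)) ->
    x \in pathv G (phi (R, false)) (phi (R, true)) ->
    x \in phi @: ([set (C, false); (D, false)] :&: [set (R, false); (R, true)]).
  move=> CD DR xCD xR; have [-> ->] := hull_map_root_edge_meet RP CD DR xCD xR.
  by apply/imsetP; exists (R, false); rewrite // !inE !eqxx orbT.
case: (edge_in_tree Ff RT u1t e1) => [[eu1 ev1]|[C1 [D1 [eu1 ev1 D1R CD1]]]];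
case: (edge_in_tree Ff RT u2t e2) => [[eu2 ev2]|[C2 [D2 [eu2 ev2 D2R CD2]]]];
  subst u1 v1 u2 v2.
- by rewrite eqxx in ne.
- by rewrite setIC; apply: root_meet.
- exact: root_meet.
exact: hull_map_cluster_edges_meet RP CD1 CD2 D1R D2R ne x1 x2.
Qed.

Lemma restrict_forLe : forLe F G.
Proof.
split; [exact: Ff | split; [exact: Gf | exists phi]].
split; [exact: hull_map_vert | split].
  by move=> u v /edge_below; apply: hull_map_mono.
split; [exact: hull_map_inner | split; [exact: hull_map_inner_inj | split]].
  exact: hull_map_leaf.
move=> R; rewrite FP => RP; split.
- by move=> u v; apply: hull_map_tree_inj.
- by move=> w u v; apply: hull_map_avoid.
- by move=> u1 v1 u2 v2; apply: hull_map_edges_meet.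
Qed.

End HullMap.

Section Admissible.
Variable I : finType.
Implicit Types (T H P Q : {set {set I}}) (C D L : {set I}).

Lemma is_meetE T i j C : is_forest T -> [set: I] \in T ->
  is_meet T i j C = (C == hull T [set i; j]).
Proof.
move=> Tf TT; have ijC D : ([set i; j] \subset D) = (i \in D) && (j \in D).
  by rewrite subUset !sub1set.
apply/and4P/eqP => [[CT iC jC /forall_inP minC]|->].
  apply/esym/hull_eq => [//||D DT]; first by rewrite ijC iC jC.
  by rewrite ijC; apply: (implyP (minC D DT)).
have ij0 : [set i; j] != set0 by apply/set0Pn; exists i; rewrite setU11.
have := sub_hull T [set i; j]; rewrite ijC => /andP[iH jH].
split; rewrite ?(hull_mem Tf ij0 TT (subsetT _)) //.
by apply/forall_inP => D DT; apply/implyP; rewrite -ijC; apply: hull_min.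
Qed.

Lemma SsetP T : is_forest T -> [set: I] \in T -> forall L C, reflect
  (exists i j, [/\ i \in L, j \in L, i != j & C = hull T [set i; j]]) (C \in Sset T L).
Proof.
move=> Tf TT L C; rewrite inE.
apply: (iffP exists_inP) => [[i iL /exists_inP[j jL /andP[ij]]]|[i [j [iL jL ij ->]]]].
  by rewrite is_meetE // => /eqP->; exists i, j.
exists i => //; apply/exists_inP; exists j => //.
by rewrite is_meetE // eqxx andbT.
Qed.

Lemma admissibleE T : is_forest T -> [set: I] \in T ->
  forall P, admissible T P <-> partition P [set: I] /\ separated T P.
Proof.
move=> Tf TT P; split=> [[Pp disjS]|[Pp sepP]]; split => //.
  move=> L1 L2 i j k l L1P L2P neL iL1 jL1 kL2 lL2 ij kl; apply/eqP => e.
  have /setP/(_ (hull T [set i; j])) := disjS L1 L2 L1P L2P neL.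
  rewrite in_setI in_set0.
  have -> : hull T [set i; j] \in Sset T L1 by apply/(SsetP Tf TT); exists i, j.
  suff -> : hull T [set i; j] \in Sset T L2 by [].
  by apply/(SsetP Tf TT); exists k, l.
move=> L1 L2 L1P L2P neL; apply/setP => C; rewrite in_setI in_set0.
apply/andP => -[/(SsetP Tf TT)[i [j [iL1 jL1 ij ->]]] /(SsetP Tf TT)[k [l [kL2 lL2 kl e]]]].
by move: (sepP L1 L2 i j k l L1P L2P neL iL1 jL1 kL2 lL2 ij kl); rewrite e eqxx.
Qed.

End Admissible.

Section Interval.
Variable I : finType.
Implicit Types (T H P Q : {set {set I}}) (S D L X : {set I}).

Lemma partition_zero : partition (zero_forest I) [set: I].
Proof.
apply/and3P; split.
- rewrite eqEsubset subsetT; apply/subsetP => i _.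
  by apply/bigcupP; exists [set i]; rewrite ?imset_f ?set11.
- apply/trivIsetP => _ _ /imsetP[i _ ->] /imsetP[j _ ->] neij.
  by rewrite disjoints1 inE; apply: contraNneq neij => ->.
- by apply/imsetP => -[i _ /setP/(_ i)]; rewrite !inE eqxx.
Qed.

Lemma restrict_zero H : is_forest H -> restrict H (zero_forest I) = zero_forest I.
Proof.
move=> [iH _ _ _]; apply/setP => X; apply/restrictP/imsetP.
  move=> [D [_ [_ /imsetP[i _ ->] eX X0]]]; exists i => //.
  by have := subsetIr D [set i]; rewrite -eX subset1 (negbTE X0) orbF => /eqP.
move=> [i _ ->]; exists [set i], [set i]; rewrite setIid imset_f //; split => //.
by apply/set0Pn; exists i; rewrite set11.
Qed.

Lemma zero_forLe H : is_forest H -> forLe (zero_forest I) H.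
Proof.
move=> Hf; have [iH _ _ _] := Hf; rewrite -(restrict_zero Hf).
apply: restrict_forLe; rewrite ?partition_zero //.
- by move=> _ /imsetP[i _ ->]; apply: exists_tree.
- by move=> _ L2 i j k l /imsetP[a _ ->] _ _; rewrite !inE => /eqP-> /eqP->; rewrite eqxx.
Qed.

Lemma restrict_restrict T P Q : partition P [set: I] -> partition Q [set: I] ->
  refines P Q -> restrict (restrict T Q) P = restrict T P.
Proof.
move=> Pp Qp PQ; apply/setP => X; apply/restrictP/restrictP.
  move=> [_ [L [/restrictP[D [M [DT MQ -> _]]] LP eX X0]]]; exists D, L; split => //.
  have [M' M'Q LM'] := PQ L LP; have /set0Pn[x] := X0.
  rewrite eX => /setIP[/setIP[_ xM] xL].
  by rewrite (partition_eq Qp MQ M'Q xM (subsetP LM' x xL)) -setIA (setIidPr LM').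
move=> [D [L [DT LP eX X0]]]; have [M MQ LM] := PQ L LP.
exists (D :&: M), L; rewrite -setIA (setIidPr LM); split => //.
apply: mem_restrict => //; apply: subset_neq0 X0.
by rewrite eX setIS.
Qed.

Lemma separated_restrict T P Q : is_forest T -> partition Q [set: I] ->
  refines Q (trees T) -> refines P Q -> separated T P -> separated (restrict T Q) P.
Proof.
move=> Tf Qp QT PQ sepP L1 L2 i j k l L1P L2P neL iL1 jL1 kL2 lL2 ij kl.
have pair_hull L x y : L \in P -> x \in L -> y \in L -> exists M,
    [/\ hull (restrict T Q) [set x; y] = hull T [set x; y] :&: M,
        hull T [set x; y] \in T & [set x; y] \subset M].
  move=> LP xL yL; have [M MQ LM] := PQ L LP.
  have xyM : [set x; y] \subset M by rewrite subUset !sub1set !(subsetP LM).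
  have xy0 : [set x; y] != set0 by apply/set0Pn; exists x; rewrite setU11.
  have [D DT MD] := block_cluster QT MQ.
  exists M; split; rewrite ?(hull_restrict Tf Qp QT xy0 MQ xyM) //.
  exact: hull_mem Tf xy0 DT (subset_trans xyM MD).
have [M1 [-> ijT ijM1]] := pair_hull L1 i j L1P iL1 jL1.
have [M2 [-> klT klM2]] := pair_hull L2 k l L2P kL2 lL2.
move: (sepP L1 L2 i j k l L1P L2P neL iL1 jL1 kL2 lL2 ij kl); apply: contraNneq => e.
have ij_kl : [set i; j] \subset hull T [set k; l].
  by apply: subset_trans (subsetIl _ M2); rewrite -e subsetI sub_hull.
have kl_ij : [set k; l] \subset hull T [set i; j].
  by apply: subset_trans (subsetIl _ M1); rewrite e subsetI sub_hull.
by rewrite eqEsubset !hull_min.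
Qed.

Lemma refines_tree T P : [set: I] \in T -> refines P (trees T).
Proof.
move=> TT L _; exists [set: I]; rewrite ?subsetT //.
by apply/treesP; split => // D _; rewrite subTset => /eqP.
Qed.

Lemma forLe_of_refines T F G : is_tree_on T -> forLe F T -> forLe G T ->
  refines (trees F) (trees G) -> forLe F G.
Proof.
move=> [Tf TT] FT GT FG; have [Ff _] := FT; have [Gf _] := GT.
have [eF sepF _] := forLe_restrict FT; have [eG _ _] := forLe_restrict GT.
have Fp := partition_trees Ff; have Gp := partition_trees Gf.
rewrite eF -(restrict_restrict T Fp Gp FG) -eG.
apply: restrict_forLe => //; rewrite eG.
apply: (separated_restrict Tf Gp _ FG sepF); exact: refines_tree.
Qed.

End Interval.

Unset Implicit Arguments.

Theorem proposition3p4 (I : finType) (T : {set {set I}}) :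
  is_tree_on T ->
  [/\ (forall F, in_interval T F -> admissible T (Pi F)),
      (forall P, admissible T P -> exists F, in_interval T F /\ Pi F = P),
      (forall F G, in_interval T F -> in_interval T G -> Pi F = Pi G -> F = G) &
      (forall F G, in_interval T F -> in_interval T G ->
         (forLe F G <-> refines (Pi F) (Pi G)))].
Proof.
move=> Ttree; have [Tf TT] := Ttree; rewrite /Pi; split.
- move=> F [_ FT]; have [Ff _] := FT; have [_ sepF _] := forLe_restrict FT.
  by apply/(admissibleE Tf TT); split; first exact: partition_trees.
- move=> P /(admissibleE Tf TT)[Pp sepP]; exists (restrict T P).
  split; last exact/trees_restrict/refines_tree.
  split; first exact/zero_forLe/restrict_forest.
  exact/restrict_forLe/sepP/refines_tree.
- move=> F G [_ /forLe_restrict[eF _ _]] [_ /forLe_restrict[eG _ _]] e.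
  by rewrite eF eG e.
move=> F G [_ FT] [_ GT]; split; first by case/forLe_restrict.
exact: forLe_of_refines Ttree FT GT.
Qed.
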